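(* Let $T$ be a normal spanning tree of a connected graph $G$ with $n$ vertices and $m$ edges. Let $r,s\in\mathbb{I}^{m-n+1}$ with $r\ne s$, and suppose there exist $\Phi=(G,\varphi)\in\mathcal{A}_T(r)$ and $\Psi=(G,\psi)\in\mathcal{A}_T(s)$ such that $\Re(\varphi(C))=\Re(\psi(C))$ for every cycle $C$ of $G$. Then $\mathcal{A}_T(r)$ and $\mathcal{A}_T(s)$ are $\mathbb{T}$-cospectral, i.e. all $\mathbb{T}$-gain graphs in $\mathcal{A}_T(r)\cup\mathcal{A}_T(s)$ have adjacency matrices with the same spectrum.
   Context: Graphs are finite, simple and undirected. $\mathbb{T}=\{z\in\mathbb{C}:|z|=1\}$, $\mathbb{I}=[0,2\pi)$. A $\mathbb{T}$-gain on $G$ is a map $\varphi$ from oriented edges to $\mathbb{T}$ with $\varphi(\overrightarrow{e_{ts}})=\varphi(\overrightarrow{e_{st}})^{-1}$; $A(\Phi)$ for $\Phi=(G,\varphi)$ is the Hermitian matrix with $(s,t)$ entry $\varphi(\overrightarrow{e_{st}})$ if $v_s\sim v_t$, else $0$; $\mathcal{T}_G$ is the set of all $\mathbb{T}$-gain graphs on $G$. The gain of a directed cycle is the product of gains of its oriented edges; the two directions of a cycle $C$ have conjugate gains, so $\Re(\varphi(C))$ is well defined. A rooted spanning tree $T$ with root $v_r$ induces the tree order ($v_x\le v_y$ iff $v_x$ is on the $T$-path from $v_r$ to $v_y$); $T$ is normal if adjacent vertices of $G$ are always comparable. The suitably oriented graph $\overrightarrow{G_T}$ orients each edge $e_{st}$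 with $v_s\le v_t$ as $\overrightarrow{e_{st}}$ if $e_{st}\in E(T)$ and as $\overrightarrow{e_{ts}}$ otherwise; the $m-n+1$ fundamental cycles of $T$ become directed cycles $\overrightarrow{C_j(T)}$. For $r=(c_1,\dots,c_{m-n+1})\in\mathbb{I}^{m-n+1}$, $\mathcal{A}_T(r)=\{(G,\varphi)\in\mathcal{T}_G:\varphi(\overrightarrow{C_j(T)})=e^{ic_j}\ \forall j\}$. *)

From mathcomp Require Import all_boot all_order all_algebra.
From mathcomp Require Export complex.
From mathcomp Require Export reals trigo.
Set Implicit Arguments. Unset Strict Implicit. Unset Printing Implicit Defensive.
Import GRing.Theory Num.Theory.
Local Open Scope ring_scope.

Section GainGraphs.
Variable n : nat.
Local Notation V := 'I_n.

Definition simple_graph (e : rel V) : Prop :=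
  symmetric e /\ irreflexive e.

Definition connected_graph (e : rel V) : Prop :=
  forall x y : V, connect e x y.

Definition n_edges (e : rel V) : nat :=
  #|[set p : V * V | e p.1 p.2 && (p.1 < p.2)%N]|.

(* cycles of a graph: sequences of >= 3 distinct vertices, consecutive
   vertices adjacent, last adjacent to first (a cycle together with a
   direction of traversal and a starting point). *)
Definition is_cycle (e : rel V) (c : seq V) : Prop :=
  (3 <= size c)%N /\ ucycle e c.

Definition spanning_tree (e t : rel V) : Prop :=
  symmetric t /\ subrel t e /\ (forall x y : V, connect t x y) /\
  (forall c : seq V, ~ is_cycle t c).

Definition tree_le (t : rel V) (r x y : V) : Prop :=
  exists p : seq V, [/\ path t r p, last r p = y, uniq (r :: p) & x \in r :: p].

Definition normal_spanning_tree (e t : rel V) (r : V) : Prop :=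
  spanning_tree e t /\
  (forall u v : V, e u v -> tree_le t r u v \/ tree_le t r v u).

Variable R : realType.
Local Notation C := R[i].

(* T-gain on the graph e: phi s t is the gain of the oriented edge s -> t *)
Definition T_gain (e : rel V) (phi : V -> V -> C) : Prop :=
  forall s t : V, e s t -> `|phi s t| = 1 /\ phi t s = (phi s t)^-1.

Definition gain_adj (e : rel V) (phi : V -> V -> C) : 'M[C]_n :=
  \matrix_(s, t) (if e s t then phi s t else 0).

Definition cycle_gain (phi : V -> V -> C) (c : seq V) : C :=
  \prod_(p <- zip c (rot 1 c)) phi p.1 p.2.

(* oriented non-tree edges (s,t) of the suitably oriented graph:
   {s,t} not in T, s <= t in the tree order; it is oriented t -> s, and its
   fundamental cycle is s -> (tree path) -> t -> s. *)
Definition nontree_pair (e t : rel V) (r : V) (p : V * V) : Prop :=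
  [/\ e p.1 p.2, ~~ t p.1 p.2 & tree_le t r p.1 p.2].

Definition fund_cycle_gain_is (t : rel V) (phi : V -> V -> C) (st : V * V)
    (z : C) : Prop :=
  forall q : seq V, path t st.1 q -> last st.1 q = st.2 -> uniq (st.1 :: q) ->
    cycle_gain phi (st.1 :: q) = z.

(* A_T(r): the gain graphs whose j-th fundamental cycle has gain e^{i c_j};
   cyc enumerates the fundamental cycles via their non-tree pairs. *)
Definition A_T (e t : rel V) (k : nat) (cyc : 'I_k -> V * V) (c : 'I_k -> R)
    (phi : V -> V -> C) : Prop :=
  T_gain e phi /\
  forall j : 'I_k, fund_cycle_gain_is t phi (cyc j) (cos (c j) +i* sin (c j))%C.

Definition in_I (k : nat) (c : 'I_k -> R) : Prop :=
  forall j, 0 <= c j < 2 * pi.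

End GainGraphs.

From mathcomp Require Import all_boot all_order all_algebra.
From mathcomp Require Import complex reals trigo.
From mathcomp Require Import fingroup perm.
From mathcomp Require Import ring.
Import GRing.Theory Num.Theory.
Local Open Scope ring_scope.
Set Implicit Arguments. Unset Strict Implicit. Unset Printing Implicit Defensive.

(* Within A_T(c) all gain graphs are switching
   equivalent: rescaling each vertex v by the gain of the tree path from the
   root to v (its potential) turns the gain of every tree edge into 1 and,
   the tree being normal, the gain of every non-tree edge into the gain of its
   fundamental cycle, which c prescribes; the adjacency matrices are thus
   similar through a diagonal matrix.
   Across A_T(r) and A_T(s), expand det(xI - A) by Leibniz.  A permutation
   cycle of length >= 3 contributes, up to sign, the gain of a cycle of G or
   0, one of length 2 contributes 1 or 0 whatever the gain, and reversing a
   permutation cycle keeps the sign and conjugates its factor.  Switching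
   from phi to psi on the permutation cycles through one more vertex at a
   time changes the expansion by a sum whose terms cancel in pairs s, s' (s'
   reversing one cycle of s), because z + conj z only depends on Re z. *)

Section CycleReversal.
Variable T : finType.
Implicit Types (s : {perm T}) (a x : T).

Lemma porbit_permE s a x : (s x \in porbit s a) = (x \in porbit s a).
Proof. by rewrite porbit_sym -(expg1 s) porbit_perm expg1 porbit_sym. Qed.

Lemma porbit_permVE s a x : (s^-1%g x \in porbit s a) = (x \in porbit s a).
Proof. by rewrite -porbitV porbit_permE. Qed.

Lemma porbit_eq_on s1 s2 x : {in porbit s2 x, s1 =1 s2} -> porbit s1 x = porbit s2 x.
Proof.
move=> eq12; have iterE i : iter i s1 x = iter i s2 x.
  by elim: i => //= i ->; rewrite eq12 // -permX mem_porbit.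
by apply/porbit_setP => y; apply/porbitP/porbitP => -[i ->]; exists i; rewrite !permX iterE.
Qed.

Lemma porbit_fixN s a x : (1 < #|porbit s a|)%N -> x \in porbit s a -> s x != x.
Proof.
move=> orbit_gt1 xa; apply: contraTneq orbit_gt1 => sx; rewrite -leqNgt.
have <- : porbit s x = porbit s a by apply/eqP; rewrite eq_porbit_mem.
rewrite -(cards1 x) subset_leq_card //; apply/subsetP => y /porbitP [i ->].
by rewrite permX inE; elim: i => //= i /eqP ->; rewrite sx.
Qed.

Lemma big_porbit (R : Type) (idx : R) (op : Monoid.com_law idx) s a (F : T -> R) :
  \big[op/idx]_(i in porbit s a) F i =
  \big[op/idx]_(i <- traject s a #|porbit s a|) F i.
Proof.
rewrite big_uniq ?uniq_traject_porbit //; apply: eq_bigl => i.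
by rewrite porbit_traject.
Qed.

Lemma traject_porbit_cons s a :
  exists k, traject s a #|porbit s a| = a :: traject s (s a) k /\
            rcons (traject s (s a) k) a = traject s (s a) k.+1.
Proof.
have := iter_porbit s a; have := card_porbit_neq0 s a.
case: #|porbit s a| => // k _ sk_a; exists k; split => //.
by rewrite trajectSr -iterSr sk_a.
Qed.

Lemma rot_traject_porbit s a :
  rot 1 (traject s a #|porbit s a|) = map s (traject s a #|porbit s a|).
Proof.
have [k [-> traject_rcons]] := traject_porbit_cons s a.
rewrite rot1_cons traject_rcons /=; congr (_ :: _).
by elim: {traject_rcons} k (s a) => //= k IHk x; rewrite IHk.
Qed.

Lemma fcycle_traject_porbit s a : fcycle s (traject s a #|porbit s a|).
Proof.
have [k [-> traject_rcons]] := traject_porbit_cons s a.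
by rewrite /= traject_rcons (fpath_traject s a k.+1).
Qed.

Definition porbit_invf s a x := if x \in porbit s a then s^-1%g x else x.

Lemma porbit_invf_inj s a : injective (porbit_invf s a).
Proof.
move=> x y; rewrite /porbit_invf.
case: ifP => xa; case: ifP => ya //; first exact: perm_inj.
- by move=> E; move: ya; rewrite -E porbit_permVE xa.
- by move=> E; move: xa; rewrite E porbit_permVE ya.
Qed.

Definition porbit_inv s a : {perm T} := perm (@porbit_invf_inj s a).

Lemma porbit_invE s a x : porbit_inv s a x = porbit_invf s a x.
Proof. exact: permE. Qed.

(* Written with a square so that it visibly has the parity of [s]. *)
Definition rev_porbit s a : {perm T} := (s * porbit_inv s a * porbit_inv s a)%g.

Lemma rev_porbitE s a x :
  rev_porbit s a x = if x \in porbit s a then s^-1%g x else s x.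
Proof.
rewrite !permM !porbit_invE /porbit_invf porbit_permE.
have [xa | xNa] := boolP (x \in porbit s a); first by rewrite permK xa.
by rewrite porbit_permE (negbTE xNa).
Qed.

Lemma odd_rev_porbit s a : odd_perm (rev_porbit s a) = odd_perm s.
Proof. by rewrite !odd_permM -addbA addbb addbF. Qed.

Lemma porbit_rev_porbit s a x : porbit (rev_porbit s a) x = porbit s x.
Proof.
have [xa | xNa] := boolP (x \in porbit s a).
  have orbit_x : porbit s x = porbit s a by apply/eqP; rewrite eq_porbit_mem.
  transitivity (porbit s^-1 x); last exact: porbitV.
  by apply: porbit_eq_on => y; rewrite porbitV orbit_x => ya; rewrite rev_porbitE ya.
apply: porbit_eq_on => y yx; rewrite rev_porbitE ifF //; apply: contraNF xNa => ya.
have /eqP <- : porbit s y == porbit s a by rewrite eq_porbit_mem.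
by rewrite porbit_sym.
Qed.

Lemma rev_porbitK a : involutive (rev_porbit^~ a).
Proof.
move=> s; apply/permP => x; rewrite rev_porbitE porbit_rev_porbit.
case: ifP => xa; last by rewrite rev_porbitE xa.
by apply: (@perm_inj _ (rev_porbit s a)); rewrite permKV rev_porbitE porbit_permE xa permK.
Qed.

End CycleReversal.

Lemma zip_rcons_last (T : Type) (y x : T) q :
  zip (y :: q) (rcons q x) = rcons (zip (y :: q) q) (last y q, x).
Proof. by elim: q y => [|z q IH] y //=; rewrite IH. Qed.

Lemma uniq_last_cat (T : eqType) (x : T) p1 p2 :
  uniq (x :: p1 ++ p2) -> uniq (last x p1 :: p2).
Proof.
rewrite -cat_cons cat_uniq => /and3P [_ p1Np2 up2] /=; rewrite up2 andbT.
by apply: contra p1Np2 => lastIp2; apply/hasP; exists (last x p1); rewrite ?mem_last.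
Qed.

Lemma invc_norm1 (R : rcfType) (z : R[i]) : `|z| = 1 -> z^-1 = (z^*)%C.
Proof. by move=> z1; rewrite invc_norm z1 expr1n invr1 mul1r. Qed.

Lemma char_poly_diag_similar (F : fieldType) n (A B : 'M[F]_n) (w : 'I_n -> F) :
  (forall i, w i != 0) -> (forall i j, A i j * w j = w i * B i j) ->
  char_poly A = char_poly B.
Proof.
move=> w_neq0 AwB; rewrite /char_poly.
have -> : char_poly_mx A = diag_mx (\row_i (w i)%:P) *m char_poly_mx B *m
                           diag_mx (\row_i ((w i)^-1)%:P).
  apply/matrixP => i j; rewrite mul_mx_diag mul_diag_mx !mxE.
  have -> : A i j = w i * B i j / w j by rewrite -AwB mulfK.
  case: eqP => [<-|_]; last by rewrite !mulr0n !sub0r mulrN mulNr !polyCM.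
  rewrite !mulr1n [RHS]mulrAC -polyCM mulfV // polyC1 mul1r.
  by rewrite [w i * _]mulrC mulfK.
rewrite !det_mulmx !det_diag mulrAC -big_split /=.
by rewrite big1 ?mul1r // => i _; rewrite !mxE -polyCM mulfV.
Qed.

Lemma disjointsU1 (T : finType) (A S : {set T}) a :
  [disjoint A & a |: S] = (a \notin A) && [disjoint A & S].
Proof.
rewrite [LHS]disjoint_sym [X in _ && X]disjoint_sym -disjointU1.
by apply: eq_disjoint => x; rewrite !inE.
Qed.

Lemma T_gain_neq0 (R : realType) n (e : rel 'I_n) (chi : 'I_n -> 'I_n -> R[i]) :
  T_gain e chi -> forall u v, e u v -> chi u v != 0.
Proof. by move=> chiT u v /chiT [chi1 _]; rewrite -normr_eq0 chi1 oner_eq0. Qed.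

Section CycleExpansion.
Variables (R : realType) (n : nat) (e : rel 'I_n).
Hypotheses (e_sym : symmetric e) (e_irr : irreflexive e).
Local Notation V := 'I_n.
Local Notation C := R[i].
Implicit Types (chi : V -> V -> C) (s : {perm V}) (a : V) (S : {set V}).

Definition conj_poly (p : {poly C}) : {poly C} := map_poly (@conjc R) p.

Definition gain_charmx chi := char_poly_mx (gain_adj e chi).

Lemma gain_charmxE chi i j :
  gain_charmx chi i j = if i == j then 'X else - (gain_adj e chi i j)%:P.
Proof.
rewrite /gain_charmx !mxE; case: eqP => [<-|_]; last by rewrite mulr0n sub0r.
by rewrite e_irr mulr1n polyC0 subr0.
Qed.

Lemma gain_adjJ chi : T_gain e chi ->
  forall i j, gain_adj e chi j i = ((gain_adj e chi i j)^*)%C.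
Proof.
move=> chiT i j; rewrite !mxE e_sym; case: ifP => eij; last by rewrite conjc0.
by have [chi1 ->] := chiT i j eij; rewrite invc_norm1.
Qed.

Lemma gain_charmxJ chi : T_gain e chi ->
  forall i j, gain_charmx chi j i = conj_poly (gain_charmx chi i j).
Proof.
move=> chiT i j; rewrite !gain_charmxE eq_sym /conj_poly.
by case: eqP => _; rewrite ?map_polyX // raddfN /= map_polyC /= gain_adjJ.
Qed.

Lemma gain_adj_mul_sym chi : T_gain e chi ->
  forall i j, gain_adj e chi i j * gain_adj e chi j i = (e i j)%:R.
Proof.
move=> chiT i j; rewrite !mxE (e_sym j i); case: ifP => eij; last by rewrite mul0r.
by have [_ ->] := chiT i j eij; rewrite mulfV // (T_gain_neq0 chiT eij).
Qed.

Definition orbit_gain chi s a : C := \prod_(i in porbit s a) gain_adj e chi i (s i).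

Definition cycle_factor chi s a : {poly C} :=
  \prod_(i in porbit s a) gain_charmx chi i (s i).

Lemma cycle_factor_long chi s a : (1 < #|porbit s a|)%N ->
  cycle_factor chi s a = ((-1) ^+ #|porbit s a| * orbit_gain chi s a)%:P.
Proof.
move=> orbit_gt1; rewrite polyCM rmorphXn rmorphN1 rmorph_prod -prodrN; apply: eq_bigr => i ia.
by rewrite gain_charmxE eq_sym (negbTE (porbit_fixN orbit_gt1 ia)).
Qed.

Lemma cycle_factor_fix chi s a : #|porbit s a| = 1%N -> cycle_factor chi s a = 'X.
Proof.
move=> orbit1; have sa : s a = a by have := iter_porbit s a; rewrite orbit1.
by rewrite /cycle_factor big_porbit orbit1 big_seq1 gain_charmxE sa eqxx.
Qed.

Lemma orbit_gain2 chi s a : T_gain e chi -> #|porbit s a| = 2 ->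
  orbit_gain chi s a = (e a (s a))%:R.
Proof.
move=> chiT orbit2; have ssa : s (s a) = a by have := iter_porbit s a; rewrite orbit2.
by rewrite /orbit_gain big_porbit orbit2 /= !big_cons big_nil mulr1 ssa gain_adj_mul_sym.
Qed.

Lemma orbit_gain_eq0 chi s a i : i \in porbit s a -> ~~ e i (s i) ->
  orbit_gain chi s a = 0.
Proof. by move=> ia eNi; rewrite /orbit_gain (bigD1 i) //= mxE (negbTE eNi) mul0r. Qed.

Lemma orbit_gain_cycle chi s a : {in porbit s a, forall i, e i (s i)} ->
  orbit_gain chi s a = cycle_gain chi (traject s a #|porbit s a|).
Proof.
move=> orbit_e; rewrite /cycle_gain rot_traject_porbit -{1}[traject _ _ _]map_id.
rewrite zip_map big_map /orbit_gain big_porbit; apply: eq_big_seq => i.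
by rewrite -porbit_traject => ia; rewrite mxE orbit_e.
Qed.

Lemma is_cycle_traject_porbit s a : (2 < #|porbit s a|)%N ->
  {in porbit s a, forall i, e i (s i)} -> is_cycle e (traject s a #|porbit s a|).
Proof.
move=> orbit_gt2 orbit_e; split; first by rewrite size_traject.
rewrite /ucycle uniq_traject_porbit andbT.
apply: (@sub_in_cycle _ (mem (porbit s a)) (frel s)).
- by move=> x y xa _ /eqP <-; apply: orbit_e.
- by apply/allP => y; rewrite -porbit_traject.
- exact: fcycle_traject_porbit.
Qed.

Lemma cycle_factor_rev_porbit chi s a : T_gain e chi ->
  cycle_factor chi (rev_porbit s a) a = conj_poly (cycle_factor chi s a).
Proof.
move=> chiT; rewrite /cycle_factor porbit_rev_porbit /conj_poly rmorph_prod.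
rewrite (reindex_inj (@perm_inj _ s)) /=; apply: eq_big => [i|i ia].
  by rewrite porbit_permE.
by rewrite rev_porbitE ia permK gain_charmxJ.
Qed.

Variables phi psi : V -> V -> C.
Hypotheses (phiT : T_gain e phi) (psiT : T_gain e psi).
Hypothesis Re_cycle_gain : forall c, is_cycle e c ->
  'Re (cycle_gain phi c) = 'Re (cycle_gain psi c).

Lemma orbit_gain_addJ s a : (1 < #|porbit s a|)%N ->
  orbit_gain phi s a + ((orbit_gain phi s a)^*)%C =
  orbit_gain psi s a + ((orbit_gain psi s a)^*)%C.
Proof.
move=> orbit_gt1; case: (ltngtP #|porbit s a| 2) => [|orbit_gt2|orbit2].
- by rewrite ltnS leqNgt orbit_gt1.
- case: (pickP [pred i in porbit s a | ~~ e i (s i)]) => [i /andP [ia eNi] | all_e].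
    by rewrite !(orbit_gain_eq0 _ ia eNi).
  have orbit_e : {in porbit s a, forall i, e i (s i)}.
    by move=> i ia; move: (all_e i); rewrite /= ia => /negbFE.
  rewrite !(orbit_gain_cycle _ orbit_e) !addcJ !complexRe Re_cycle_gain //.
  exact: is_cycle_traject_porbit.
- by rewrite !orbit_gain2.
Qed.

Lemma cycle_factor_addJ s a :
  cycle_factor phi s a + conj_poly (cycle_factor phi s a) =
  cycle_factor psi s a + conj_poly (cycle_factor psi s a).
Proof.
case: (ltngtP #|porbit s a| 1) => [|orbit_gt1|orbit1].
- by rewrite ltnS leqn0 (negbTE (card_porbit_neq0 s a)).
- rewrite !cycle_factor_long // /conj_poly !map_polyC /= -!polyCD; congr (_%:P).
  by rewrite !rmorphM !rmorphXn !rmorphN1 -!mulrDr orbit_gain_addJ.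
- by rewrite !cycle_factor_fix.
Qed.

Definition hybrid_entry S s i : {poly C} :=
  if [disjoint porbit s i & S] then gain_charmx phi i (s i) else gain_charmx psi i (s i).

Definition hybrid_term S s : {poly C} := (-1) ^+ s * \prod_i hybrid_entry S s i.

Definition hybrid_det S : {poly C} := \sum_(s : 'S_n) hybrid_term S s.

Lemma hybrid_det0 : hybrid_det set0 = char_poly (gain_adj e phi).
Proof.
apply: eq_bigr => s _; congr (_ * _); apply: eq_bigr => i _.
by rewrite /hybrid_entry disjoints_subset setC0 subsetT.
Qed.

Lemma hybrid_detT : hybrid_det setT = char_poly (gain_adj e psi).
Proof.
apply: eq_bigr => s _; congr (_ * _); apply: eq_bigr => i _.
rewrite /hybrid_entry ifF //; apply/negP => /disjointFr/(_ (porbit_id s i)).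
by rewrite in_setT.
Qed.

Definition hybrid_diff S a s : {poly C} :=
  if [disjoint porbit s a & S] then
    (-1) ^+ s * (\prod_(i | i \notin porbit s a) hybrid_entry S s i) *
    (cycle_factor phi s a - cycle_factor psi s a)
  else 0.

Lemma hybrid_termD S a s :
  hybrid_term S s - hybrid_term (a |: S) s = hybrid_diff S a s.
Proof.
rewrite /hybrid_term /hybrid_diff (bigID (mem (porbit s a))) /=.
rewrite [X in _ - _ * X](bigID (mem (porbit s a))) /=.
have out_eq : \prod_(i | i \notin porbit s a) hybrid_entry (a |: S) s i =
              \prod_(i | i \notin porbit s a) hybrid_entry S s i.
  by apply: eq_bigr => i ia; rewrite /hybrid_entry disjointsU1 porbit_sym (negbTE ia).
have in_eq X : \prod_(i in porbit s a) hybrid_entry X s i =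
    if [disjoint porbit s a & X] then cycle_factor phi s a else cycle_factor psi s a.
  rewrite /cycle_factor; case: ifP => aX; apply: eq_bigr => i ia;
  by rewrite /hybrid_entry (_ : porbit s i = porbit s a) ?aX //; apply/eqP; rewrite eq_porbit_mem.
rewrite out_eq !in_eq disjointsU1 porbit_id /=.
case: ifP => _; last by rewrite subrr.
by rewrite -mulrBr -mulrBl -mulrA [X in _ = _ * X]mulrC.
Qed.

Lemma hybrid_diff_rev S a s :
  hybrid_diff S a (rev_porbit s a) + hybrid_diff S a s = 0.
Proof.
rewrite /hybrid_diff odd_rev_porbit porbit_rev_porbit !cycle_factor_rev_porbit //.
have -> : \prod_(i | i \notin porbit s a) hybrid_entry S (rev_porbit s a) i =
          \prod_(i | i \notin porbit s a) hybrid_entry S s i.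
  by apply: eq_bigr => i ia; rewrite /hybrid_entry porbit_rev_porbit rev_porbitE (negbTE ia).
case: ifP => _; last by rewrite addr0.
by rewrite -mulrDr addrACA -opprD ![conj_poly _ + _]addrC cycle_factor_addJ subrr mulr0.
Qed.

Lemma hybrid_detU1 S a : hybrid_det (a |: S) = hybrid_det S.
Proof.
apply/eqP; rewrite eq_sym -subr_eq0 /hybrid_det -sumrB.
under eq_bigr do rewrite hybrid_termD.
set D := (X in X == 0).
have D2 : D *+ 2 = 0.
  rewrite mulr2n {1}/D (reindex_inj (can_inj (@rev_porbitK _ a))) -big_split /=.
  by apply: big1 => s _; rewrite hybrid_diff_rev.
by move/eqP: D2; rewrite -scaler_nat scale_poly_eq0 pnatr_eq0.
Qed.

Lemma Re_cycle_gain_char_poly :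
  char_poly (gain_adj e phi) = char_poly (gain_adj e psi).
Proof.
rewrite -hybrid_det0 -hybrid_detT.
have -> : [set: V] = [set x in enum V] by apply/setP => x; rewrite !inE mem_enum.
elim: (enum V) => [|x l IHl]; first by congr hybrid_det; apply/setP => y; rewrite !inE.
by rewrite IHl -(hybrid_detU1 _ x); congr hybrid_det; apply/setP => y; rewrite !inE.
Qed.

End CycleExpansion.

Section TreePaths.
Variables (n : nat) (t : rel 'I_n).
Hypotheses (t_sym : symmetric t) (t_acyclic : forall c, ~ is_cycle t c).

Lemma tree_path_uniq x p q :
  path t x p -> path t x q -> last x p = last x q ->
  uniq (x :: p) -> uniq (x :: q) -> p = q.
Proof.
elim: p x q => [|y p IHp] x q.
  case: q => // z q _ _ /= lastE _ /andP [xNq _].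
  by move: xNq; rewrite lastE mem_last.
move=> /= /andP [txy tp] tq lastE /andP [xNp up] uq.
have xy : x != y by apply: contraNneq xNp => ->; exact: mem_head.
have [yq|yNq] := boolP (y \in q); last first.
  suff pE : p = x :: q by move: xNp; rewrite pE !inE eqxx orbT.
  apply: (IHp y) => //=; first by rewrite t_sym txy tq.
  by rewrite inE eq_sym (negbTE xy) yNq.
move: tq lastE uq; case/splitPr: yq => [[|z q1] q2] tq lastE uq.
  move: tq uq => /= /andP [_ tq2] /andP [_ uq2].
  by congr (_ :: _); apply: (IHp y).
case: (@t_acyclic (x :: y :: rev (z :: q1))); split; first by rewrite /= size_rev.
apply/andP; split.
  move: tq; rewrite -cat_rcons cat_path => /andP [tq1 _].
  rewrite -(eq_path (fun u v => t_sym v u)) -rev_path in tq1.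
  by rewrite /= txy -rev_cons; move: tq1; rewrite last_rcons belast_rcons.
move: uq xNp; rewrite /= !mem_cat !inE !negb_or mem_rev rev_uniq cat_uniq /=.
case/andP => /andP [xz xNq] /and5P [/and3P [zNq1 zy _] uq1 yNq _ _] /andP [xy' _].
move: xNq yNq; rewrite mem_cat !negb_or => /andP [xNq1 _] /andP [yNq1 _].
by rewrite mem_rev !inE !negb_or xy' xz eq_sym zy zNq1 uq1 xNq1 yNq1.
Qed.

End TreePaths.

Section SwitchingEquivalence.
Variables (R : realType) (n : nat) (e t : rel 'I_n) (root : 'I_n).
Local Notation V := 'I_n.
Local Notation C := R[i].
Hypotheses (e_sym : symmetric e) (e_irr : irreflexive e) (t_span : spanning_tree e t).
Hypothesis t_normal : forall u v, e u v -> tree_le t root u v \/ tree_le t root v u.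
Implicit Types (chi : V -> V -> C) (u v x : V) (p : seq V).

Let t_sym : symmetric t. Proof. by case: t_span. Qed.
Let t_sub u v : t u v -> e u v. Proof. by case: t_span => _ [/(_ u v)]. Qed.
Let t_acyclic c : ~ is_cycle t c. Proof. by case: t_span => _ [_ [_]]. Qed.

Definition path_gain chi x p : C := \prod_(uv <- zip (x :: p) p) chi uv.1 uv.2.

Lemma path_gain_cons chi x y p : path_gain chi x (y :: p) = chi x y * path_gain chi y p.
Proof. exact: big_cons. Qed.

Lemma path_gain_cat chi x p1 p2 :
  path_gain chi x (p1 ++ p2) = path_gain chi x p1 * path_gain chi (last x p1) p2.
Proof.
elim: p1 x => [|y p1 IHp1] x /=; first by rewrite [path_gain _ _ [::]]big_nil mul1r.
by rewrite !path_gain_cons IHp1 mulrA.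
Qed.

Lemma cycle_gain_cons chi x p :
  cycle_gain chi (x :: p) = path_gain chi x p * chi (last x p) x.
Proof. by rewrite /cycle_gain rot1_cons zip_rcons_last big_rcons. Qed.

Lemma path_gain_neq0 chi x p : T_gain e chi -> path t x p -> path_gain chi x p != 0.
Proof.
move=> chiT; elim: p x => [|y p IHp] x /=; first by rewrite [path_gain _ _ _]big_nil oner_eq0.
case/andP => txy tp; rewrite path_gain_cons mulf_neq0 ?IHp //.
exact: (T_gain_neq0 chiT (t_sub txy)).
Qed.

Lemma exists_root_path v :
  exists p, [&& path t root p, last root p == v & uniq (root :: p)].
Proof.
have /connectP [p tp ->] : connect t root v by case: t_span => _ [_ []].
by have [p' tp' up' _] := shortenP tp; exists p'; rewrite tp' eqxx up'.
Qed.

Definition root_path v := xchoose (exists_root_path v).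

Lemma root_pathP v :
  [/\ path t root (root_path v), last root (root_path v) = v & uniq (root :: root_path v)].
Proof. by have /and3P [tp /eqP lastE up] := xchooseP (exists_root_path v). Qed.

Lemma root_path_uniq v p :
  path t root p -> last root p = v -> uniq (root :: p) -> root_path v = p.
Proof.
have [tp lastE up] := root_pathP v => tp' lastE' up'.
by apply: (tree_path_uniq t_sym t_acyclic tp tp') => //; congruence.
Qed.

Definition potential chi v := path_gain chi root (root_path v).

Lemma potential_neq0 chi v : T_gain e chi -> potential chi v != 0.
Proof. by move=> chiT; have [tp _ _] := root_pathP v; apply: path_gain_neq0. Qed.

Lemma potential_tree chi u v : T_gain e chi -> t u v ->
  potential chi v = potential chi u * chi u v.
Proof.
move=> chiT tuv; rewrite /potential.
have [tp lastE up] := root_pathP u.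
have [vIp|vNp] := boolP (v \in root :: root_path u); last first.
  rewrite (@root_path_uniq v (rcons (root_path u) v)).
  - by rewrite -cats1 path_gain_cat lastE path_gain_cons [path_gain _ _ [::]]big_nil mulr1.
  - by rewrite rcons_path tp lastE.
  - by rewrite last_rcons.
  - by rewrite -rcons_cons rcons_uniq vNp up.
move: tp lastE up; case/splitPl: vIp => p1 p2 lastE1 tp lastE up.
move: tp; rewrite cat_path => /andP [tp1 tp2].
have pv : root_path v = p1.
  by apply: root_path_uniq; rewrite // -cat_cons cat_uniq in up; case/and3P: up.
have p2E : p2 = [:: u].
  rewrite lastE1 in tp2; apply: (tree_path_uniq t_sym t_acyclic tp2).
  - by rewrite /= t_sym tuv.
  - by rewrite -lastE1 -last_cat lastE.
  - by rewrite -lastE1 uniq_last_cat.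
  - rewrite /= inE andbT; apply: contraTneq tuv => ->.
    by apply/negP => /t_sub; rewrite e_irr.
rewrite pv p2E path_gain_cat path_gain_cons [path_gain _ _ [::]]big_nil mulr1 lastE1.
have [_ ->] := chiT _ _ (t_sub tuv).
by rewrite -mulrA mulVf ?mulr1 // (T_gain_neq0 chiT (t_sub tuv)).
Qed.

Lemma potential_nontree chi u v z : T_gain e chi ->
  nontree_pair e t root (u, v) -> fund_cycle_gain_is t chi (u, v) z ->
  potential chi v * chi v u = potential chi u * z.
Proof.
move=> chiT [/= euv tNuv [p [tp lastE up uIp]]] cycle_z.
move: tp lastE up; case/splitPl: uIp => p1 p2 lastE1 tp lastE up.
move: (tp); rewrite cat_path => /andP [tp1 tp2].
have pu : root_path u = p1.
  by apply: root_path_uniq; rewrite // -cat_cons cat_uniq in up; case/and3P: up.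
have pv : root_path v = p1 ++ p2 by apply: root_path_uniq.
rewrite lastE1 in tp2; have lastE2 : last u p2 = v by rewrite -lastE1 -last_cat.
have := cycle_z p2 tp2 lastE2; rewrite -lastE1 uniq_last_cat // lastE1 => /(_ isT).
by rewrite cycle_gain_cons lastE2 => <-; rewrite /potential pv pu path_gain_cat lastE1 mulrA.
Qed.

Definition switched_gain chi u v := potential chi u * chi u v / potential chi v.

Lemma switched_gain_tree chi u v : T_gain e chi -> t u v -> switched_gain chi u v = 1.
Proof.
move=> chiT tuv; rewrite /switched_gain (potential_tree chiT tuv) mulfV //.
by rewrite mulf_neq0 ?potential_neq0 ?(T_gain_neq0 chiT (t_sub tuv)).
Qed.

Lemma switched_gainV chi u v : T_gain e chi -> e u v ->
  switched_gain chi u v = (switched_gain chi v u)^-1.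
Proof.
move=> chiT euv; rewrite /switched_gain; have [_ ->] := chiT _ _ euv.
have [pu pv] := (potential_neq0 u chiT, potential_neq0 v chiT).
by field; rewrite pu pv (T_gain_neq0 chiT euv).
Qed.

Variables (k : nat) (cyc : 'I_k -> V * V).
Hypothesis cyc_onto : forall uv, nontree_pair e t root uv -> exists j, cyc j = uv.

Lemma switched_gain_A_T (c : 'I_k -> R) chi1 chi2 :
  A_T e t cyc c chi1 -> A_T e t cyc c chi2 ->
  forall u v, e u v -> switched_gain chi1 u v = switched_gain chi2 u v.
Proof.
move=> [chi1T cycle1] [chi2T cycle2].
have nontreeE u v : nontree_pair e t root (u, v) ->
    switched_gain chi1 v u = switched_gain chi2 v u.
  move=> uv_nontree; have [j cycjE] := cyc_onto uv_nontree.
  have := cycle1 j; have := cycle2 j; rewrite cycjE => cycle2j cycle1j.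
  rewrite /switched_gain (potential_nontree chi1T uv_nontree cycle1j).
  rewrite (potential_nontree chi2T uv_nontree cycle2j).
  by rewrite ![potential _ u * _]mulrC !mulfK ?potential_neq0.
move=> u v euv; have [tuv|tNuv] := boolP (t u v); first by rewrite !switched_gain_tree.
have tNvu : ~~ t v u by rewrite t_sym.
case: (t_normal euv) => [le_uv | le_vu]; last by apply: nontreeE; split; rewrite // e_sym.
by rewrite (switched_gainV chi1T) // (switched_gainV chi2T) // nontreeE.
Qed.

Lemma A_T_char_poly (c : 'I_k -> R) chi1 chi2 :
  A_T e t cyc c chi1 -> A_T e t cyc c chi2 ->
  char_poly (gain_adj e chi1) = char_poly (gain_adj e chi2).
Proof.
move=> A1 A2; have chi1T := A1.1; have chi2T := A2.1.
apply: (@char_poly_diag_similar _ _ _ _ (fun v => potential chi2 v / potential chi1 v)).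
  by move=> v; rewrite mulf_neq0 ?invr_eq0 ?potential_neq0.
move=> u v; rewrite !mxE; case: ifP => euv; last by rewrite mul0r mulr0.
have [p1u p1v] := (potential_neq0 u chi1T, potential_neq0 v chi1T).
have [p2u p2v] := (potential_neq0 u chi2T, potential_neq0 v chi2T).
transitivity (switched_gain chi1 u v * (potential chi2 v / potential chi1 u)).
  by rewrite /switched_gain; field; rewrite p1u p1v.
by rewrite (switched_gain_A_T A1 A2 euv) /switched_gain; field; rewrite p1u p2v.
Qed.

End SwitchingEquivalence.

Theorem lemma3p2 (R : realType) (n : nat) (e : rel 'I_n) (t : rel 'I_n)
  (root : 'I_n)
  (cyc : 'I_(n_edges e - n + 1) -> 'I_n * 'I_n)
  (r s : 'I_(n_edges e - n + 1) -> R) :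
  simple_graph e -> connected_graph e ->
  normal_spanning_tree e t root ->
  injective cyc ->
  (forall p, nontree_pair e t root p <-> exists j, cyc j = p) ->
  in_I r -> in_I s -> r <> s ->
  (exists phi psi : 'I_n -> 'I_n -> R[i],
     A_T e t cyc r phi /\ A_T e t cyc s psi /\
     forall C : seq 'I_n, is_cycle e C ->
       'Re (cycle_gain phi C) = 'Re (cycle_gain psi C)) ->
  forall phi1 phi2 : 'I_n -> 'I_n -> R[i],
    (A_T e t cyc r phi1 \/ A_T e t cyc s phi1) ->
    (A_T e t cyc r phi2 \/ A_T e t cyc s phi2) ->
    char_poly (gain_adj e phi1) = char_poly (gain_adj e phi2).
Proof.
move=> [e_sym e_irr] _ [t_span t_normal] _ cycP _ _ _ [phi [psi [Aphi [Apsi Re_eq]]]].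
have cyc_onto uv : nontree_pair e t root uv -> exists j, cyc j = uv by move/cycP.
have A_T_cospectral := A_T_char_poly e_sym e_irr t_span t_normal cyc_onto.
have char_poly_phi chi : A_T e t cyc r chi \/ A_T e t cyc s chi ->
    char_poly (gain_adj e chi) = char_poly (gain_adj e phi).
  case=> Achi; first exact: A_T_cospectral Achi Aphi.
  rewrite (Re_cycle_gain_char_poly e_sym e_irr Aphi.1 Apsi.1 Re_eq).
  exact: A_T_cospectral Achi Apsi.
by move=> phi1 phi2 A1 A2; rewrite (char_poly_phi _ A1) (char_poly_phi _ A2).
Qed.
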